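(* Let $X$ be a real Banach space, $\varepsilon>0$, $A\subseteq X$ bounded, nonempty and non-$\varepsilon$-dentable, and $C=\overline{\operatorname{co}}(A)$. Let $S_0$ be a slice of $C$, $D\subseteq C$ with $\alpha(D)<\varepsilon$, and $\gamma\in(0,1)$. Let $\mathcal S(S_0,D)$ be the collection of all slices $S$ of $C$ with $S\subseteq S_0\setminus D$, and let $\Lambda=\Lambda(S_0,D,\gamma)$ be the union of all $\gamma$-shallow parallels $S^\gamma$ of slices $S\in\mathcal S(S_0,D)$. Then $$C=\overline{\operatorname{co}}\big((C\setminus S_0)\cup(\Lambda\cap A)\big).$$
   Context: $\overline{\operatorname{co}}$ is the norm-closed convex hull. The Kuratowski measure of noncompactness $\alpha(E)$ is the infimum of all $\varepsilon>0$ such that $E$ can be covered by finitely many sets of diameter at most $\varepsilon$. For bounded nonempty $E\subseteq X$, $f$ in the closed unit ball of $X^*$ and $\delta>0$, the slice $S(f,E,\delta)=\{e\in E: f(e)>\sup f(E)-\delta\}$; a slice of $E$ is any set of this form. A bounded set is non-$\varepsilon$-dentable if every slice has diameter $>\varepsilon$. For $\gamma\in(0,1)$ and a slice $S=S(f,C,\delta)$ of $C$ (taken with a defining pair $(f,\delta)$; all such representations are included), its $\gamma$-shallow parallel is $S^\gamma=S(f,C,\gamma\delta/2)$. *)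

From Stdlib Require Import Reals.
Open Scope R_scope.

Record BanachSpace := {
  carrier :> Type;
  vzero : carrier;
  vadd : carrier -> carrier -> carrier;
  vopp : carrier -> carrier;
  vscal : R -> carrier -> carrier;
  vnorm : carrier -> R;
  vadd_assoc : forall x y z, vadd x (vadd y z) = vadd (vadd x y) z;
  vadd_comm : forall x y, vadd x y = vadd y x;
  vadd_0 : forall x, vadd vzero x = x;
  vadd_opp : forall x, vadd x (vopp x) = vzero;
  vscal_addr : forall a x y, vscal a (vadd x y) = vadd (vscal a x) (vscal a y);
  vscal_addl : forall a b x, vscal (a + b) x = vadd (vscal a x) (vscal b x);
  vscal_assoc : forall a b x, vscal a (vscal b x) = vscal (a * b) x;
  vscal_1 : forall x, vscal 1 x = x;
  vnorm_eq0 : forall x, vnorm x = 0 -> x = vzero;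
  vnorm_scal : forall a x, vnorm (vscal a x) = Rabs a * vnorm x;
  vnorm_triangle : forall x y, vnorm (vadd x y) <= vnorm x + vnorm y;
  vcomplete : forall u : nat -> carrier,
    (forall eps, 0 < eps -> exists N, forall n m, (N <= n)%nat -> (N <= m)%nat ->
        vnorm (vadd (u n) (vopp (u m))) < eps) ->
    exists l, forall eps, 0 < eps -> exists N, forall n, (N <= n)%nat ->
        vnorm (vadd (u n) (vopp l)) < eps
}.

Arguments vzero {_}. Arguments vadd {_} _ _. Arguments vopp {_} _.
Arguments vscal {_} _ _. Arguments vnorm {_} _.

Section Defs.
Variable X : BanachSpace.

Definition vsub (x y : X) : X := vadd x (vopp y).

(** f belongs to the closed unit ball of X^*: linear, with |f x| <= ||x||
    (which implies continuity and ||f|| <= 1). *)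
Definition in_dual_ball (f : X -> R) : Prop :=
  (forall x y, f (vadd x y) = f x + f y) /\
  (forall a x, f (vscal a x) = a * f x) /\
  (forall x, Rabs (f x) <= vnorm x).

Definition bounded_set (E : X -> Prop) : Prop :=
  exists M, forall x, E x -> vnorm x <= M.

Definition nonempty_set (E : X -> Prop) : Prop := exists x, E x.

Definition diam_le (E : X -> Prop) (e : R) : Prop :=
  forall x y, E x -> E y -> vnorm (vsub x y) <= e.

Fixpoint rsum (n : nat) (l : nat -> R) : R :=
  match n with O => 0 | S k => rsum k l + l k end.
Fixpoint vsum (n : nat) (l : nat -> R) (p : nat -> X) : X :=
  match n with O => vzero | S k => vadd (vsum k l p) (vscal (l k) (p k)) end.

Definition conv (E : X -> Prop) (x : X) : Prop :=
  exists n (l : nat -> R) (p : nat -> X),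
    (forall i, (i < n)%nat -> 0 <= l i /\ E (p i)) /\
    rsum n l = 1 /\ x = vsum n l p.

Definition norm_closure (E : X -> Prop) (x : X) : Prop :=
  forall eps, 0 < eps -> exists y, E y /\ vnorm (vsub x y) < eps.

Definition cch (E : X -> Prop) : X -> Prop := norm_closure (conv E).

Definition slice (f : X -> R) (E : X -> Prop) (delta : R) (x : X) : Prop :=
  E x /\ exists s, is_lub (fun r => exists e, E e /\ r = f e) s /\ f x > s - delta.

Definition is_slice_of (E S : X -> Prop) : Prop :=
  exists f delta, in_dual_ball f /\ 0 < delta /\
    forall x, S x <-> slice f E delta x.

Definition non_dentable (eps : R) (E : X -> Prop) : Prop :=
  forall f delta, in_dual_ball f -> 0 < delta -> ~ diam_le (slice f E delta) eps.

Definition finite_cover_diam (E : X -> Prop) (e : R) : Prop :=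
  exists n (B : nat -> X -> Prop),
    (forall i, (i < n)%nat -> diam_le (B i) e) /\
    (forall x, E x -> exists i, (i < n)%nat /\ B i x).

Definition is_kuratowski (E : X -> Prop) (a : R) : Prop :=
  (forall e, 0 < e -> finite_cover_diam E e -> a <= e) /\
  (forall b, (forall e, 0 < e -> finite_cover_diam E e -> b <= e) -> b <= a).

(** Lambda(S0,D,gamma): union of gamma-shallow parallels S(f,C,gamma*delta/2)
    over all representations S(f,C,delta) of slices of C contained in S0 \ D *)
Definition Lambda (C S0 D : X -> Prop) (gamma : R) (x : X) : Prop :=
  exists f delta, in_dual_ball f /\ 0 < delta /\
    (forall y, slice f C delta y -> S0 y /\ ~ D y) /\
    slice f C (gamma * delta / 2) x.

End Defs.

Arguments vsub {_} _ _.
Arguments in_dual_ball {_} _. Arguments bounded_set {_} _. Arguments nonempty_set {_} _.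
Arguments diam_le {_} _ _. Arguments vsum {_} _ _ _.
Arguments conv {_} _ _. Arguments norm_closure {_} _ _. Arguments cch {_} _ _.
Arguments slice {_} _ _ _ _. Arguments is_slice_of {_} _ _.
Arguments non_dentable {_} _ _. Arguments finite_cover_diam {_} _ _.
Arguments is_kuratowski {_} _ _. Arguments Lambda {_} _ _ _ _ _.

(* If some x in C were outside the closed convex hull of B = (C \ S0) u (Lambda n A),
   a functional f would separate x from it, and the slice {f > c} of C would miss
   C \ S0, i.e. lie in S0.  Cover D by finitely many sets of diameter e < eps.  A slice
   of C can be shrunk to avoid any one set B' of diameter e: otherwise C would lie in
   the closed convex hull of B' together with the part of C below the slice, and then
   the top slices of A would have diameter <= eps, contradicting non-dentability.
   After finitely many shrinkings we reach a slice of C inside S0 \ D; the points of A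
   near its top lie in its gamma-shallow parallel, hence in B, yet f > c there.
   Separation is the Hahn-Banach theorem for a gauge of K plus a ball, and
   Hahn-Banach follows from Zorn's lemma. *)

From Stdlib Require Import Reals Lra Lia List Classical ClassicalEpsilon.
From mathcomp Require classical_sets.
Open Scope R_scope.

Arguments vadd_assoc {_} _ _ _. Arguments vadd_comm {_} _ _. Arguments vadd_0 {_} _.
Arguments vadd_opp {_} _. Arguments vscal_addr {_} _ _ _. Arguments vscal_addl {_} _ _ _.
Arguments vscal_assoc {_} _ _ _. Arguments vscal_1 {_} _. Arguments vnorm_eq0 {_} _ _.
Arguments vnorm_scal {_} _ _. Arguments vnorm_triangle {_} _ _.

Section VectorAlgebra.
Variable X : BanachSpace.

Lemma vadd_0r (x : X) : vadd x vzero = x.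
Proof. rewrite vadd_comm. apply vadd_0. Qed.

Lemma vadd_cancel (x y z : X) : vadd x y = vadd x z -> y = z.
Proof.
  intro H. assert (E : vadd (vopp x) (vadd x y) = vadd (vopp x) (vadd x z)) by now rewrite H.
  now rewrite !vadd_assoc, (vadd_comm (vopp x) x), vadd_opp, !vadd_0 in E.
Qed.

Lemma vscal_0 (x : X) : vscal 0 x = vzero.
Proof.
  apply (vadd_cancel (vscal 0 x)). rewrite vadd_0r, <- vscal_addl. now rewrite Rplus_0_l.
Qed.

Lemma vopp_scal (x : X) : vopp x = vscal (-1) x.
Proof.
  apply (vadd_cancel x). rewrite vadd_opp. rewrite <- (vscal_1 x) at 1.
  rewrite <- vscal_addl. replace (1 + -1) with 0 by ring. now rewrite vscal_0.
Qed.

(* Reflection for [vring]: an expression evaluates to the linear combination of its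
   atoms with coefficients [vexpr_coef], so vector identities reduce to real ones. *)
Inductive vexpr : Type :=
| VAtom (i : nat) | VZero | VAdd (a b : vexpr) | VOpp (a : vexpr) | VScal (r : R) (a : vexpr).

Fixpoint vexpr_eval (env : list X) (e : vexpr) : X :=
  match e with
  | VAtom i => nth i env vzero
  | VZero => vzero
  | VAdd a b => vadd (vexpr_eval env a) (vexpr_eval env b)
  | VOpp a => vopp (vexpr_eval env a)
  | VScal r a => vscal r (vexpr_eval env a)
  end.

Fixpoint vexpr_coef (e : vexpr) (i : nat) : R :=
  match e with
  | VAtom j => if Nat.eqb i j then 1 else 0
  | VZero => 0
  | VAdd a b => vexpr_coef a i + vexpr_coef b i
  | VOpp a => - vexpr_coef a i
  | VScal r a => r * vexpr_coef a i
  end.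

Fixpoint vexpr_wf (n : nat) (e : vexpr) : bool :=
  match e with
  | VAtom j => Nat.ltb j n
  | VZero => true
  | VAdd a b => andb (vexpr_wf n a) (vexpr_wf n b)
  | VOpp a | VScal _ a => vexpr_wf n a
  end.

Fixpoint lincomb (env : list X) (c : nat -> R) : X :=
  match env with
  | nil => vzero
  | v :: env' => vadd (vscal (c O) v) (lincomb env' (fun i => c (S i)))
  end.

Lemma lincomb_add env : forall c d,
  lincomb env (fun i => c i + d i) = vadd (lincomb env c) (lincomb env d).
Proof.
  induction env as [|v env IH]; intros c d; simpl.
  - now rewrite vadd_0.
  - rewrite IH, vscal_addl, <- !vadd_assoc. f_equal.
    rewrite !vadd_assoc. f_equal. apply vadd_comm.
Qed.

Lemma lincomb_scal env : forall r c, lincomb env (fun i => r * c i) = vscal r (lincomb env c).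
Proof.
  induction env as [|v env IH]; intros r c; simpl.
  - rewrite <- (vscal_0 vzero), vscal_assoc. now rewrite Rmult_0_r.
  - now rewrite IH, vscal_addr, vscal_assoc.
Qed.

Lemma lincomb_zero env : lincomb env (fun _ => 0) = vzero.
Proof. induction env as [|v env IH]; simpl; auto. now rewrite IH, vscal_0, vadd_0. Qed.

Lemma lincomb_ext env : forall c d,
  (forall i, (i < length env)%nat -> c i = d i) -> lincomb env c = lincomb env d.
Proof.
  induction env as [|v env IH]; intros c d H; simpl; auto.
  rewrite (H O) by (simpl; lia). f_equal. apply IH. intros i Hi. apply H. simpl; lia.
Qed.

Lemma lincomb_atom env : forall j, (j < length env)%nat ->
  lincomb env (fun i => if Nat.eqb i j then 1 else 0) = nth j env vzero.
Proof.
  induction env as [|v env IH]; intros j Hj; simpl in *; [lia|].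
  destruct j as [|j]; simpl.
  - now rewrite vscal_1, lincomb_zero, vadd_0r.
  - rewrite vscal_0, vadd_0. apply IH. lia.
Qed.

Lemma vexpr_eval_lincomb env e :
  vexpr_wf (length env) e = true -> vexpr_eval env e = lincomb env (vexpr_coef e).
Proof.
  induction e; simpl; intro H.
  - symmetry. apply lincomb_atom. now apply Nat.ltb_lt.
  - symmetry. apply lincomb_zero.
  - apply andb_prop in H as [H1 H2].
    rewrite IHe1, IHe2 by auto. symmetry. apply lincomb_add.
  - rewrite IHe, vopp_scal, <- lincomb_scal by auto. apply lincomb_ext. intros; ring.
  - now rewrite IHe, <- lincomb_scal.
Qed.

Lemma vexpr_eval_eq env e1 e2 :
  vexpr_wf (length env) e1 = true -> vexpr_wf (length env) e2 = true ->
  (forall i, (i < length env)%nat -> vexpr_coef e1 i = vexpr_coef e2 i) ->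
  vexpr_eval env e1 = vexpr_eval env e2.
Proof. intros H1 H2 H. rewrite !vexpr_eval_lincomb by auto. now apply lincomb_ext. Qed.

End VectorAlgebra.

Ltac vindex x l := lazymatch l with
  | x :: _ => constr:(O)
  | _ :: ?l' => let n := vindex x l' in constr:(S n) end.

Ltac vatoms t l := lazymatch t with
  | @vadd _ ?a ?b => let l1 := vatoms a l in vatoms b l1
  | @vopp _ ?a => vatoms a l
  | @vscal _ _ ?a => vatoms a l
  | @vzero _ => l
  | _ => match l with
         | _ => let _ := vindex t l in l
         | _ => constr:(t :: l) end
  end.

Ltac vreify t l := lazymatch t with
  | @vadd _ ?a ?b => let ra := vreify a l in let rb := vreify b l in constr:(VAdd ra rb)
  | @vopp _ ?a => let ra := vreify a l in constr:(VOpp ra)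
  | @vscal _ ?r ?a => let ra := vreify a l in constr:(VScal r ra)
  | @vzero _ => constr:(VZero)
  | _ => let n := vindex t l in constr:(VAtom n)
  end.

(* Proves an identity between vector expressions, leaving the real coefficient
   identities that [ring] cannot close (e.g. ones needing [field]). *)
Ltac vring :=
  unfold vsub in *;
  lazymatch goal with |- @eq (carrier ?X) ?a ?b =>
    let l1 := vatoms a (@nil (carrier X)) in let l := vatoms b l1 in
    let ea := vreify a l in let eb := vreify b l in
    change (vexpr_eval X l ea = vexpr_eval X l eb); apply vexpr_eval_eq;
    [reflexivity | reflexivity |
     let i := fresh "i" in let Hi := fresh "Hi" in intros i Hi; simpl in Hi;
     repeat (first [exfalso; lia | destruct i as [|i]; [simpl; try ring | ]])]
  end.

Section NormedSpace.
Variable X : BanachSpace.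
Implicit Types x y z : X.

Lemma vnorm_zero : vnorm (@vzero X) = 0.
Proof.
  replace (@vzero X) with (vscal 0 (@vzero X)) by vring.
  rewrite vnorm_scal, Rabs_R0. ring.
Qed.

Lemma vnorm_opp x : vnorm (vopp x) = vnorm x.
Proof.
  replace (vopp x) with (vscal (-1) x) by vring.
  rewrite vnorm_scal, Rabs_left by lra. ring.
Qed.

Lemma vnorm_ge0 x : 0 <= vnorm x.
Proof.
  pose proof (vnorm_triangle x (vopp x)) as H.
  rewrite vadd_opp, vnorm_zero, vnorm_opp in H. lra.
Qed.

Lemma vnorm_subC x y : vnorm (vsub x y) = vnorm (vsub y x).
Proof. replace (vsub x y) with (vopp (vsub y x)) by vring. apply vnorm_opp. Qed.

Lemma vnorm_sub_triangle x y z : vnorm (vsub x z) <= vnorm (vsub x y) + vnorm (vsub y z).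
Proof. replace (vsub x z) with (vadd (vsub x y) (vsub y z)) by vring. apply vnorm_triangle. Qed.

Lemma vnorm_sub_ge x y : vnorm x - vnorm y <= vnorm (vsub x y).
Proof.
  pose proof (vnorm_triangle (vsub x y) y) as H.
  replace (vadd (vsub x y) y) with x in H by vring. lra.
Qed.

Lemma vnorm_sub_le x y : vnorm (vsub x y) <= vnorm x + vnorm y.
Proof.
  replace (vsub x y) with (vadd x (vopp y)) by vring.
  rewrite <- (vnorm_opp y). apply vnorm_triangle.
Qed.

Lemma rsum_ext n a b : (forall i, (i < n)%nat -> a i = b i) -> rsum n a = rsum n b.
Proof. induction n; simpl; intros H; auto. rewrite IHn, H; auto. Qed.

Lemma rsum_le n a b : (forall i, (i < n)%nat -> a i <= b i) -> rsum n a <= rsum n b.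
Proof.
  induction n; simpl; intros H; [lra|].
  specialize (IHn (fun i Hi => H i ltac:(lia))). specialize (H n ltac:(lia)). lra.
Qed.

Lemma rsumD n a b : rsum n (fun i => a i + b i) = rsum n a + rsum n b.
Proof. induction n; simpl; [ring|]. rewrite IHn. ring. Qed.

Lemma rsumZ n r a : rsum n (fun i => r * a i) = r * rsum n a.
Proof. induction n; simpl; [ring|]. rewrite IHn. ring. Qed.

Lemma rsumZr n r a : rsum n (fun i => a i * r) = rsum n a * r.
Proof. induction n; simpl; [ring|]. rewrite IHn. ring. Qed.

Definition linear_functional (f : X -> R) :=
  (forall x y, f (vadd x y) = f x + f y) /\ (forall a x, f (vscal a x) = a * f x).

Lemma dual_ball_linear f : in_dual_ball f -> linear_functional f.
Proof. intros [H1 [H2 _]]. now split. Qed.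

Lemma linear_sub f x y : linear_functional f -> f (vsub x y) = f x - f y.
Proof.
  intros [H1 H2]. replace (vsub x y) with (vadd x (vscal (-1) y)) by vring.
  rewrite H1, H2. ring.
Qed.

Lemma linear_vsum f n l (p : nat -> X) :
  linear_functional f -> f (vsum n l p) = rsum n (fun i => l i * f (p i)).
Proof.
  intros [H1 H2]. induction n; simpl.
  - replace (@vzero X) with (vscal 0 (@vzero X)) by vring. rewrite H2. ring.
  - rewrite H1, H2, IHn. ring.
Qed.

Lemma dual_ball_le f x y : in_dual_ball f -> f x <= f y + vnorm (vsub x y).
Proof.
  intro Hf. pose proof (proj2 (proj2 Hf) (vsub x y)) as H.
  rewrite linear_sub in H by (apply dual_ball_linear; auto).
  pose proof (Rle_abs (f x - f y)). lra.
Qed.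

Definition convex_weights n (l : nat -> R) :=
  (forall i, (i < n)%nat -> 0 <= l i) /\ rsum n l = 1.

Lemma vsum_norm_le n l (q : nat -> X) : (forall i, (i < n)%nat -> 0 <= l i) ->
  vnorm (vsum n l q) <= rsum n (fun i => l i * vnorm (q i)).
Proof.
  induction n; simpl; intros H; [rewrite vnorm_zero; lra|].
  eapply Rle_trans; [apply vnorm_triangle|].
  rewrite vnorm_scal, Rabs_pos_eq by (apply H; lia).
  specialize (IHn (fun i Hi => H i ltac:(lia))). lra.
Qed.

Lemma vsum_sub_l n l (p : nat -> X) y :
  vsum n l (fun i => vsub y (p i)) = vsub (vscal (rsum n l) y) (vsum n l p).
Proof. induction n; simpl; [vring|]. rewrite IHn. vring. Qed.

Lemma rsum_weighted_le n l a c : convex_weights n l ->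
  (forall i, (i < n)%nat -> a i <= c) -> rsum n (fun i => l i * a i) <= c.
Proof.
  intros [Hl Hs] H. replace c with (rsum n (fun i => l i * c)) by (rewrite rsumZr, Hs; ring).
  apply rsum_le. intros i Hi. apply Rmult_le_compat_l; auto.
Qed.

(* The distance to a point is convex and a linear functional is affine, so an
   affine bound on distances passes from points to their convex combinations. *)
Lemma vsum_dist_affine_le n l (p : nat -> X) y g a b :
  convex_weights n l -> linear_functional g ->
  (forall i, (i < n)%nat -> vnorm (vsub y (p i)) <= a + b * g (p i)) ->
  vnorm (vsub y (vsum n l p)) <= a + b * g (vsum n l p).
Proof.
  intros Hl Hg H. pose proof Hl as [Hl0 Hl1].
  replace (vsub y (vsum n l p)) with (vsum n l (fun i => vsub y (p i)))
    by (rewrite vsum_sub_l, Hl1; vring).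
  eapply Rle_trans; [apply vsum_norm_le; auto|].
  rewrite linear_vsum by auto.
  replace (a + b * rsum n (fun i => l i * g (p i)))
    with (rsum n (fun i => l i * (a + b * g (p i)))).
  - apply rsum_le. intros i Hi. apply Rmult_le_compat_l; auto.
  - rewrite (rsum_ext n _ (fun i => l i * a + b * (l i * g (p i)))) by (intros; ring).
    rewrite rsumD, rsumZr, rsumZ, Hl1. ring.
Qed.

End NormedSpace.

Section HahnBanach.
Variable X : BanachSpace.

(* [Epi u v] reads "v >= p u" for a sublinear functional p, which is only
   described through its epigraph: p need not be given as a function. *)
Variable Epi : X -> R -> Prop.
Hypothesis Epi_add : forall u v u' v', Epi u v -> Epi u' v' -> Epi (vadd u u') (v + v').
Hypothesis Epi_scal : forall u v t, 0 < t -> Epi u v -> Epi (vscal t u) (t * v).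
Hypothesis Epi_total : forall u, exists v, Epi u v.
Hypothesis Epi_0 : Epi vzero 0.

Definition dominated_graph (G : X -> R -> Prop) :=
  (forall x a y b, G x a -> G y b -> G (vadd x y) (a + b)) /\
  (forall t x a, G x a -> G (vscal t x) (t * a)) /\
  (forall x a v, G x a -> Epi x v -> a <= v).

Lemma dominated_graph_functional G x a b : dominated_graph G -> G x a -> G x b -> a = b.
Proof.
  intros [H1 [H2 H3]] Ha Hb.
  assert (Hle : forall a b, G x a -> G x b -> a - b <= 0).
  { intros a' b' Ha' Hb'. pose proof (H1 _ _ _ _ Ha' (H2 (-1) _ _ Hb')) as H.
    replace (vadd x (vscal (-1) x)) with (@vzero X) in H by vring.
    pose proof (H3 _ _ _ H Epi_0). lra. }
  pose proof (Hle _ _ Ha Hb). pose proof (Hle _ _ Hb Ha). lra.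
Qed.

Definition graph_extension (G : X -> R -> Prop) (z : X) (r : R) (x : X) (a : R) :=
  exists y b t, G y b /\ x = vadd y (vscal t z) /\ a = b + t * r.

Lemma graph_extension_incl G z r x a : G x a -> graph_extension G z r x a.
Proof. intros H. exists x, a, 0. repeat split; auto. vring. ring. Qed.

Lemma graph_extension_new G z r : G vzero 0 -> graph_extension G z r z r.
Proof. intros H. exists vzero, 0, 1. repeat split; auto. vring. ring. Qed.

(* The value r at z must satisfy b - p(y - z) <= r <= p(y' + z) - b' for all (y,b),
   (y',b') in G; sublinearity makes the left side bounded by the right. *)
Lemma extension_value_exists G z : dominated_graph G -> G vzero 0 ->
  exists r, (forall y b v, G y b -> Epi (vsub y z) v -> b - v <= r) /\
            (forall y b v, G y b -> Epi (vadd y z) v -> r <= v - b).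
Proof.
  intros [H1 [_ H3]] H0.
  assert (Key : forall y b y' b' v v', G y b -> G y' b' ->
             Epi (vsub y z) v -> Epi (vadd y' z) v' -> b - v <= v' - b').
  { intros y b y' b' v v' Hy Hy' Hv Hv'. pose proof (Epi_add _ _ _ _ Hv Hv') as H.
    replace (vadd (vsub y z) (vadd y' z)) with (vadd y y') in H by vring.
    pose proof (H3 _ _ _ (H1 _ _ _ _ Hy Hy') H). lra. }
  set (L := fun w => exists y b v, G y b /\ Epi (vsub y z) v /\ w = b - v).
  destruct (Epi_total z) as [v0 Hv0]. destruct (Epi_total (vsub vzero z)) as [v1 Hv1].
  assert (Lb : bound L).
  { exists (v0 - 0). intros w (y & b & v & Hy & Hv & ->). apply (Key y b vzero 0 v v0); auto.
    now replace (vadd vzero z) with z by vring. }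
  destruct (completeness L Lb (ex_intro _ (0 - v1) (ex_intro _ vzero
      (ex_intro _ 0 (ex_intro _ v1 (conj H0 (conj Hv1 eq_refl))))))) as [r [Hr1 Hr2]].
  exists r. split.
  - intros y b v Hy Hv. apply Hr1. now exists y, b, v.
  - intros y b v Hy Hv. apply Hr2. intros w (y' & b' & v' & Hy' & Hv' & ->). eapply Key; eauto.
Qed.

Lemma dominated_graph_extend G z :
  dominated_graph G -> G vzero 0 -> exists r, dominated_graph (graph_extension G z r).
Proof.
  intros HG H0. pose proof HG as [H1 [H2 H3]].
  destruct (extension_value_exists G z HG H0) as (r & R1 & R2).
  exists r. split; [|split].
  - intros x a y b (y1 & b1 & t1 & Hy1 & -> & ->) (y2 & b2 & t2 & Hy2 & -> & ->).
    exists (vadd y1 y2), (b1 + b2), (t1 + t2). repeat split; auto. vring. ring.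
  - intros s x a (y & b & t & Hy & -> & ->). exists (vscal s y), (s * b), (s * t).
    repeat split; auto. vring. ring.
  - intros x a v (y & b & t & Hy & -> & ->) Hv.
    destruct (Rtotal_order t 0) as [Ht | [Ht | Ht]].
    + pose proof (Epi_scal _ _ (/ - t) ltac:(apply Rinv_0_lt_compat; lra) Hv) as H.
      replace (vscal (/ - t) (vadd y (vscal t z))) with (vsub (vscal (/ - t) y) z) in H
        by (vring; field; lra).
      pose proof (R1 _ _ _ (H2 (/ - t) _ _ Hy) H) as Hr.
      assert (b - v <= - t * r).
      { replace (b - v) with (- t * (/ - t * b - / - t * v)) by (field; lra).
        apply Rmult_le_compat_l; lra. }
      lra.
    + subst t. replace (vadd y (vscal 0 z)) with y in Hv by vring.
      pose proof (H3 _ _ _ Hy Hv). lra.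
    + pose proof (Epi_scal _ _ (/ t) ltac:(apply Rinv_0_lt_compat; auto) Hv) as H.
      replace (vscal (/ t) (vadd y (vscal t z))) with (vadd (vscal (/ t) y) z) in H
        by (vring; field; lra).
      pose proof (R2 _ _ _ (H2 (/ t) _ _ Hy) H) as Hr.
      assert (t * r <= v - b).
      { replace (v - b) with (t * (/ t * v - / t * b)) by (field; lra).
        apply Rmult_le_compat_l; lra. }
      lra.
Qed.

Variable G0 : X -> R -> Prop.
Hypothesis G0_dominated : dominated_graph G0.
Hypothesis G0_0 : G0 vzero 0.

Let extends_G0 (S : classical_sets.set (carrier X * R)) (x : X) (a : R) := S (x, a) \/ G0 x a.

Lemma dominated_graph_chain_union (F : classical_sets.set (classical_sets.set (carrier X * R))) :
  (forall S, F S -> dominated_graph (extends_G0 S)) ->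
  classical_sets.total_on F classical_sets.subset ->
  dominated_graph (extends_G0 (classical_sets.bigcup F (fun S => S))).
Proof.
  intros FP Ftot. set (U := classical_sets.bigcup F (fun S => S)).
  assert (Common : forall x a y b, extends_G0 U x a -> extends_G0 U y b ->
     (G0 x a /\ G0 y b) \/ exists S, F S /\ extends_G0 S x a /\ extends_G0 S y b).
  { unfold extends_G0, U, classical_sets.bigcup, classical_sets.mkset. intros x a y b [[S1 F1 S1a] | Ha] [[S2 F2 S2b] | Hb]; try (left; now split).
    - right. destruct (Ftot S1 S2 F1 F2) as [I | I].
      + exists S2. split; [exact F2|]. split; left; [apply I; exact S1a | exact S2b].
      + exists S1. split; [exact F1|]. split; left; [exact S1a | apply I; exact S2b].
    - right. exists S1. repeat split; auto.
    - right. exists S2. repeat split; auto. }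
  assert (Lift : forall S x a, F S -> extends_G0 S x a -> extends_G0 U x a).
  { unfold extends_G0, U. intros S x a FS [H | H]; [left; now exists S | now right]. }
  destruct G0_dominated as [G1 [G2 G3]].
  split; [|split]; unfold extends_G0 at 1.
  - intros x a y b Ha Hb. destruct (Common _ _ _ _ Ha Hb) as [[A1 A2] | (S & FS & A1 & A2)].
    + right. auto.
    + apply (Lift S); auto. now apply (FP S FS).
  - intros t x a [[S FS Sa] | Ha]; [|right; auto].
    apply (Lift S); auto. apply (FP S FS). now left.
  - intros x a v [[S FS Sa] | Ha] Hv; [|eauto].
    apply (FP S FS) with x; auto. now left.
Qed.

Theorem hahn_banach : exists f, linear_functional X f /\
  (forall u v, Epi u v -> f u <= v) /\ (forall x a, G0 x a -> f x = a).
Proof.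
  destruct (@classical_sets.Zorn_bigcup _ (fun S => dominated_graph (extends_G0 S)))
    as [M [HM Mmax]].
  { intros F FP Ftot. apply dominated_graph_chain_union; auto. }
  set (H := extends_G0 M).
  assert (Htot : forall x, exists a, H x a).
  { intro z. apply NNPP. intro Hn.
    destruct (dominated_graph_extend H z HM (or_intror G0_0)) as [r Hr].
    apply (Mmax (fun p => graph_extension H z r (fst p) (snd p))).
    - split.
      + intros [x a] Ha. apply graph_extension_incl. now left.
      + intro Inc. apply Hn. exists r. left. apply (Inc (z, r)).
        apply graph_extension_new. now right.
    - destruct Hr as [K1 [K2 K3]]. split; [|split].
      + intros x a y b [Ha | Ha] [Hb | Hb]; left; apply K1; auto;
          apply graph_extension_incl; now right.
      + intros t x a [Ha | Ha]; left; apply K2; auto; apply graph_extension_incl; now right.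
      + intros x a v [Ha | Ha]; apply K3; auto; apply graph_extension_incl; now right. }
  set (f := fun x => proj1_sig (constructive_indefinite_description _ (Htot x))).
  assert (Hf : forall x, H x (f x)) by (intro x; apply proj2_sig).
  pose proof HM as [K1 [K2 K3]].
  exists f. split; [split|split].
  - intros x y. apply (dominated_graph_functional H (vadd x y)); auto. apply K1; apply Hf.
  - intros t x. apply (dominated_graph_functional H (vscal t x)); auto. apply K2; apply Hf.
  - intros u v Hv. eapply K3; [apply Hf | exact Hv].
  - intros x a Ha. apply (dominated_graph_functional H x); auto. now right.
Qed.

End HahnBanach.

Section Separation.
Variable X : BanachSpace.

Definition convex_set (K : X -> Prop) :=
  forall k1 k2 t, K k1 -> K k2 -> 0 <= t <= 1 -> K (vadd (vscal t k1) (vscal (1 - t) k2)).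

Lemma linear_scaled_dual_ball f rho : linear_functional X f -> 0 < rho ->
  (forall u, f u <= rho * vnorm u) -> in_dual_ball (fun u => f u / rho).
Proof.
  intros [H1 H2] Hrho Hf. split; [|split].
  - intros u v. rewrite H1. field. lra.
  - intros a u. rewrite H2. field. lra.
  - intros u. apply Rabs_le. pose proof (Hf u) as Hu. pose proof (Hf (vscal (-1) u)) as Hn.
    rewrite H2, vnorm_scal, Rabs_left in Hn by lra.
    split; apply (Rmult_le_reg_r rho); try lra; field_simplify; lra.
Qed.

Section Gauge.
Variables (K : X -> Prop) (k0 : X) (rho : R).
Hypothesis K_convex : convex_set K.
Hypothesis K_k0 : K k0.
Hypothesis rho_pos : 0 < rho.

(* Epigraph of p(u) = inf { lam + rho * ||u - lam (k - k0)|| : lam >= 0, k in K },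
   a sublinear functional with p <= rho ||.|| and p <= 1 on K - k0. *)
Definition gauge_value (u : X) (lam : R) (k : X) :=
  lam + rho * vnorm (vsub u (vscal lam (vsub k k0))).

Definition gauge_epi (u : X) (v : R) :=
  exists lam k, 0 <= lam /\ K k /\ gauge_value u lam k <= v.

Lemma gauge_value_ge0 u lam k : 0 <= lam -> 0 <= gauge_value u lam k.
Proof.
  intros H. unfold gauge_value.
  pose proof (vnorm_ge0 X (vsub u (vscal lam (vsub k k0)))). nra.
Qed.

Lemma gauge_epi_ge0 u v : gauge_epi u v -> 0 <= v.
Proof. intros (lam & k & Hl & _ & Hv). pose proof (gauge_value_ge0 u lam k Hl). lra. Qed.

Lemma gauge_epi_norm u : gauge_epi u (rho * vnorm u).
Proof.
  exists 0, k0. repeat split; auto; [lra|]. unfold gauge_value.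
  replace (vsub u (vscal 0 (vsub k0 k0))) with u by vring. lra.
Qed.

Lemma gauge_epi_shift k : K k -> gauge_epi (vsub k k0) 1.
Proof.
  intros Hk. exists 1, k. repeat split; auto; [lra|]. unfold gauge_value.
  replace (vsub (vsub k k0) (vscal 1 (vsub k k0))) with (@vzero X) by vring.
  rewrite vnorm_zero. lra.
Qed.

Lemma gauge_epi_add u v u' v' :
  gauge_epi u v -> gauge_epi u' v' -> gauge_epi (vadd u u') (v + v').
Proof.
  intros (l1 & k1 & L1 & K1 & V1) (l2 & k2 & L2 & K2 & V2).
  set (t := if Req_dec_T (l1 + l2) 0 then 0 else l1 / (l1 + l2)).
  set (k := vadd (vscal t k1) (vscal (1 - t) k2)).
  assert (Hk : vscal (l1 + l2) (vsub k k0)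
               = vadd (vscal l1 (vsub k1 k0)) (vscal l2 (vsub k2 k0))).
  { unfold k, t. destruct (Req_dec_T (l1 + l2) 0) as [E | E].
    - replace l1 with 0 by lra. replace l2 with 0 by lra. vring.
    - vring; field; lra. }
  assert (Ht : 0 <= t <= 1).
  { unfold t. destruct (Req_dec_T (l1 + l2) 0); [lra|].
    split; [unfold Rdiv; apply Rmult_le_pos; [lra | left; apply Rinv_0_lt_compat; lra]|].
    apply (Rmult_le_reg_r (l1 + l2)); [lra|]. field_simplify; lra. }
  exists (l1 + l2), k. split; [lra|split; [now apply K_convex|]].
  unfold gauge_value in *. rewrite Hk.
  replace (vsub (vadd u u') (vadd (vscal l1 (vsub k1 k0)) (vscal l2 (vsub k2 k0))))
    with (vadd (vsub u (vscal l1 (vsub k1 k0))) (vsub u' (vscal l2 (vsub k2 k0)))) by vring.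
  pose proof (vnorm_triangle (vsub u (vscal l1 (vsub k1 k0))) (vsub u' (vscal l2 (vsub k2 k0)))).
  nra.
Qed.

Lemma gauge_epi_scal u v t : 0 < t -> gauge_epi u v -> gauge_epi (vscal t u) (t * v).
Proof.
  intros Ht (lam & k & L & Hk & V). exists (t * lam), k. split; [nra|split; auto].
  unfold gauge_value in *.
  replace (vsub (vscal t u) (vscal (t * lam) (vsub k k0)))
    with (vscal t (vsub u (vscal lam (vsub k k0)))) by vring.
  rewrite vnorm_scal, Rabs_pos_eq by lra. nra.
Qed.

(* For lam <= 1 the point lam k + (1 - lam) k0 lies in K, at distance >= d from x;
   for lam > 1 the linear term takes over, with margin d / (d + 2 Delta). *)
Lemma gauge_value_far x d Delta lam k :
  rho * d = 2 -> 0 <= Delta -> (forall k, K k -> vnorm (vsub k k0) <= Delta) ->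
  (forall k, K k -> d <= vnorm (vsub x k)) -> 0 <= lam -> K k ->
  1 + d / (d + 2 * Delta) <= gauge_value (vsub x k0) lam k.
Proof.
  intros Hd HDelta Hdiam Hfar Hl Hk. unfold gauge_value.
  assert (Hd0 : 0 < d) by nra.
  assert (Hm : d / (d + 2 * Delta) <= 1).
  { apply (Rmult_le_reg_r (d + 2 * Delta)); [lra|]. field_simplify; lra. }
  destruct (Rle_lt_dec lam 1) as [L1 | L1].
  - assert (Hk' : K (vadd (vscal lam k) (vscal (1 - lam) k0))) by (apply K_convex; auto; lra).
    replace (vsub (vsub x k0) (vscal lam (vsub k k0)))
      with (vsub x (vadd (vscal lam k) (vscal (1 - lam) k0))) by vring.
    pose proof (Hfar _ Hk'). nra.
  - set (mu := lam - 1).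
    replace (vsub (vsub x k0) (vscal lam (vsub k k0)))
      with (vsub (vsub x k) (vscal mu (vsub k k0))) by (unfold mu; vring).
    set (N := vnorm (vsub (vsub x k) (vscal mu (vsub k k0)))).
    assert (HN : d - mu * Delta <= N).
    { pose proof (vnorm_sub_ge X (vsub x k) (vscal mu (vsub k k0))) as H.
      rewrite vnorm_scal, Rabs_pos_eq in H by (unfold mu; lra).
      pose proof (Hdiam k Hk). pose proof (Hfar k Hk).
      assert (mu * vnorm (vsub k k0) <= mu * Delta) by (apply Rmult_le_compat_l; unfold mu; lra).
      fold N in H. lra. }
    pose proof (vnorm_ge0 X (vsub (vsub x k) (vscal mu (vsub k k0)))). fold N in H.
    destruct (Rle_lt_dec (d / (d + 2 * Delta)) mu) as [M1 | M1].
    + unfold mu in M1. nra.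
    + assert (mu * (d + 2 * Delta) < d).
      { apply (Rmult_lt_compat_r (d + 2 * Delta)) in M1; [|lra].
        now replace (d / (d + 2 * Delta) * (d + 2 * Delta)) with d in M1 by (field; lra). }
      assert (mu * Delta <= d / 2) by nra.
      unfold mu. nra.
Qed.

Lemma gauge_dominates_line w c0 : 0 <= c0 ->
  (forall lam k, 0 <= lam -> K k -> c0 <= gauge_value w lam k) ->
  dominated_graph X gauge_epi (fun u a => exists t, u = vscal t w /\ a = t * c0).
Proof.
  intros Hc0 Hw. split; [|split].
  - intros u a v b (t1 & -> & ->) (t2 & -> & ->). exists (t1 + t2). split; [vring | ring].
  - intros s u a (t & -> & ->). exists (s * t). split; [vring | ring].
  - intros u a v (t & -> & ->) Hv. destruct (Rle_lt_dec t 0) as [T | T].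
    + pose proof (gauge_epi_ge0 _ _ Hv). nra.
    + pose proof (gauge_epi_scal _ _ (/ t) ltac:(apply Rinv_0_lt_compat; auto) Hv) as H.
      replace (vscal (/ t) (vscal t w)) with w in H by (vring; field; lra).
      destruct H as (lam & k & Hl & Hk & Hv'). pose proof (Hw lam k Hl Hk).
      replace v with (t * (/ t * v)) by (field; lra).
      apply Rmult_le_compat_l; lra.
Qed.

End Gauge.

Theorem separation (K : X -> Prop) (x : X) (M d : R) :
  convex_set K -> (forall k, K k -> vnorm k <= M) ->
  0 < d -> (forall k, K k -> d <= vnorm (vsub x k)) ->
  exists f c, in_dual_ball f /\ (forall k, K k -> f k <= c) /\ c < f x.
Proof.
  intros Kc KM Hd Kfar.
  destruct (classic (exists k0, K k0)) as [[k0 Hk0] | Hne].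
  2:{ exists (fun _ => 0), (-1). split; [|split].
      - split; [|split]; intros; try ring. rewrite Rabs_R0. apply vnorm_ge0.
      - intros k Hk. exfalso. apply Hne. eauto.
      - lra. }
  set (rho := 2 / d). assert (Hrho : 0 < rho) by (apply Rdiv_lt_0_compat; lra).
  set (Delta := 2 * M).
  assert (HDelta : 0 <= Delta) by (pose proof (KM k0 Hk0); pose proof (vnorm_ge0 X k0); unfold Delta; lra).
  assert (Hdiam : forall k, K k -> vnorm (vsub k k0) <= Delta).
  { intros k Hk. pose proof (vnorm_sub_le X k k0). pose proof (KM k Hk). pose proof (KM k0 Hk0).
    unfold Delta. lra. }
  set (c0 := 1 + d / (d + 2 * Delta)).
  assert (Hc0 : 0 <= c0) by (unfold c0; pose proof (Rdiv_lt_0_compat d (d + 2 * Delta) Hd ltac:(lra)); lra).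
  set (w := vsub x k0).
  set (G0 := fun u a => exists t, u = vscal t w /\ a = t * c0).
  assert (HG0 : dominated_graph X (gauge_epi K k0 rho) G0).
  { apply gauge_dominates_line; auto. intros lam k Hl Hk.
    apply (gauge_value_far K k0 rho Kc Hk0 Hrho x d Delta lam k); auto. unfold rho. field. lra. }
  destruct (hahn_banach X (gauge_epi K k0 rho)
              (gauge_epi_add K k0 rho Kc Hrho) (gauge_epi_scal K k0 rho)
              (fun u => ex_intro _ _ (gauge_epi_norm K k0 rho Hk0 u))
              ltac:(rewrite <- (Rmult_0_r rho), <- (vnorm_zero X); apply gauge_epi_norm; auto)
              G0 HG0 ltac:(exists 0; split; [vring | ring]))
    as (f & Hlin & Hdom & Hext).
  assert (Fx : f x = c0 + f k0).
  { rewrite <- (Hext w c0) by (exists 1; split; [vring | ring]).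
    unfold w. rewrite linear_sub by auto. ring. }
  exists (fun u => f u / rho), ((1 + f k0) / rho). split; [|split].
  - apply linear_scaled_dual_ball; auto. intro u. apply Hdom, gauge_epi_norm; auto.
  - intros k Hk. pose proof (Hdom _ _ (gauge_epi_shift K k0 rho k Hk)).
    rewrite linear_sub in H by auto.
    apply Rmult_le_compat_r; [left; now apply Rinv_0_lt_compat | lra].
  - rewrite Fx. apply Rmult_lt_compat_r; [now apply Rinv_0_lt_compat|].
    unfold c0. pose proof (Rdiv_lt_0_compat d (d + 2 * Delta) Hd ltac:(lra)). lra.
Qed.

End Separation.

Section Hull.
Variable X : BanachSpace.
Implicit Types E F : X -> Prop.

Definition seq_cat {T : Type} (n1 : nat) (a b : nat -> T) (i : nat) : T :=
  if Nat.ltb i n1 then a i else b (i - n1)%nat.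

Lemma rsum_seq_cat n1 n2 a b : rsum (n1 + n2) (seq_cat n1 a b) = rsum n1 a + rsum n2 b.
Proof.
  induction n2 as [|n2 IH]; simpl.
  - rewrite Nat.add_0_r, Rplus_0_r. apply rsum_ext. intros i Hi.
    unfold seq_cat. now destruct (Nat.ltb_spec i n1); [|lia].
  - rewrite Nat.add_succ_r. simpl. rewrite IH. unfold seq_cat.
    destruct (Nat.ltb_spec (n1 + n2) n1); [lia|]. replace (n1 + n2 - n1)%nat with n2 by lia. ring.
Qed.

Lemma vsum_ext n l l' (p p' : nat -> X) :
  (forall i, (i < n)%nat -> l i = l' i /\ p i = p' i) -> vsum n l p = vsum n l' p'.
Proof.
  induction n; intros H; simpl; auto. destruct (H n ltac:(lia)) as [-> ->].
  f_equal. apply IHn. intros i Hi. apply H. lia.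
Qed.

Lemma vsum_seq_cat n1 n2 l1 l2 (p1 p2 : nat -> X) :
  vsum (n1 + n2) (seq_cat n1 l1 l2) (seq_cat n1 p1 p2) = vadd (vsum n1 l1 p1) (vsum n2 l2 p2).
Proof.
  induction n2 as [|n2 IH]; simpl.
  - rewrite Nat.add_0_r, vadd_0r. apply vsum_ext. intros i Hi.
    unfold seq_cat. now destruct (Nat.ltb_spec i n1); [|lia].
  - rewrite Nat.add_succ_r. simpl. rewrite IH. unfold seq_cat.
    destruct (Nat.ltb_spec (n1 + n2) n1); [lia|]. replace (n1 + n2 - n1)%nat with n2 by lia.
    vring.
Qed.

Lemma vsum_scal n t l (p : nat -> X) : vsum n (fun i => t * l i) p = vscal t (vsum n l p).
Proof. induction n; simpl; [vring|]. rewrite IHn. vring. Qed.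

Lemma conv_convex E : convex_set X (conv E).
Proof.
  intros z1 z2 t (n1 & l1 & p1 & H1 & S1 & ->) (n2 & l2 & p2 & H2 & S2 & ->) Ht.
  exists (n1 + n2)%nat, (seq_cat n1 (fun i => t * l1 i) (fun i => (1 - t) * l2 i)),
    (seq_cat n1 p1 p2). split; [|split].
  - intros i Hi. unfold seq_cat. destruct (Nat.ltb_spec i n1).
    + destruct (H1 i ltac:(lia)). split; auto. nra.
    + destruct (H2 (i - n1)%nat ltac:(lia)). split; auto. nra.
  - rewrite rsum_seq_cat, !rsumZ, S1, S2. ring.
  - now rewrite vsum_seq_cat, !vsum_scal.
Qed.

Lemma closure_convex (S : X -> Prop) : convex_set X S -> convex_set X (norm_closure S).
Proof.
  intros HS y1 y2 t C1 C2 Ht eps He.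
  destruct (C1 eps He) as (z1 & Z1 & D1). destruct (C2 eps He) as (z2 & Z2 & D2).
  exists (vadd (vscal t z1) (vscal (1 - t) z2)). split; [now apply HS|].
  replace (vsub (vadd (vscal t y1) (vscal (1 - t) y2)) (vadd (vscal t z1) (vscal (1 - t) z2)))
    with (vadd (vscal t (vsub y1 z1)) (vscal (1 - t) (vsub y2 z2))) by vring.
  eapply Rle_lt_trans; [apply vnorm_triangle|]. rewrite !vnorm_scal, !Rabs_pos_eq by lra.
  destruct (Req_dec t 0) as [-> | Ht0]; nra.
Qed.

Lemma cch_convex E : convex_set X (cch E).
Proof. apply closure_convex, conv_convex. Qed.

Lemma cch_self E x : E x -> cch E x.
Proof.
  intros H eps He. exists x. split.
  - exists 1%nat, (fun _ => 1), (fun _ => x). repeat split; simpl; auto; try lra. vring.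
  - replace (vsub x x) with (@vzero X) by vring. rewrite vnorm_zero. lra.
Qed.

Lemma cch_norm_le E M : (forall y, E y -> vnorm y <= M) -> forall y, cch E y -> vnorm y <= M.
Proof.
  intros HM y Hy. apply Rnot_lt_le. intro Hlt.
  destruct (Hy (vnorm y - M) ltac:(lra)) as (z & (n & l & p & H1 & S1 & ->) & D).
  assert (vnorm (vsum n l p) <= M).
  { eapply Rle_trans; [apply vsum_norm_le; intros i Hi; apply H1; auto|].
    apply rsum_weighted_le; [split; auto; apply H1|]. intros i Hi. apply HM, H1; auto. }
  pose proof (vnorm_sub_ge X y (vsum n l p)). lra.
Qed.

Lemma cch_dual_le E f c : in_dual_ball f ->
  (forall y, E y -> f y <= c) -> forall y, cch E y -> f y <= c.
Proof.
  intros Hf HE y Hy. apply Rnot_lt_le. intro Hlt.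
  destruct (Hy (f y - c) ltac:(lra)) as (z & (n & l & p & H1 & S1 & ->) & D).
  assert (f (vsum n l p) <= c).
  { rewrite linear_vsum by (now apply dual_ball_linear).
    apply rsum_weighted_le; [split; auto; apply H1|]. intros i Hi. apply HE, H1; auto. }
  pose proof (dual_ball_le X f y (vsum n l p) Hf). lra.
Qed.

Lemma cch_separation E x M : (forall y, E y -> vnorm y <= M) -> ~ cch E x ->
  exists f c, in_dual_ball f /\ (forall y, cch E y -> f y <= c) /\ c < f x.
Proof.
  intros HM Hx.
  assert (Hd : exists eps, 0 < eps /\ forall z, conv E z -> eps <= vnorm (vsub x z)).
  { apply NNPP. intro Hn. apply Hx. intros eps He. apply NNPP. intro Hn'. apply Hn.
    exists eps. split; auto. intros z Hz. apply Rnot_lt_le. intro. apply Hn'. now exists z. }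
  destruct Hd as (eps & He & Hfar).
  apply (separation X (cch E) x M (eps / 2));
    [apply cch_convex | now apply cch_norm_le | lra |].
  intros k Hk. destruct (Hk (eps / 2) ltac:(lra)) as (z & Hz & D).
  pose proof (Hfar z Hz). pose proof (vnorm_sub_triangle X x k z). lra.
Qed.

Lemma cch_minimal E F M : (forall y, F y -> vnorm y <= M) ->
  (forall y, E y -> cch F y) -> forall x, cch E x -> cch F x.
Proof.
  intros HM HEF x Hx. apply NNPP. intro Hn.
  destruct (cch_separation F x M HM Hn) as (f & c & Hf & HF & Hfx).
  pose proof (cch_dual_le E f c Hf (fun y Hy => HF y (HEF y Hy)) x Hx). lra.
Qed.

End Hull.

Section SlicesAndCovers.
Variable X : BanachSpace.
Implicit Types E : X -> Prop.

Definition is_sup_on E (f : X -> R) (s : R) := is_lub (fun r => exists e, E e /\ r = f e) s.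

Lemma is_sup_on_ge E f s y : is_sup_on E f s -> E y -> f y <= s.
Proof. intros [H _] Hy. apply H. now exists y. Qed.

Lemma is_sup_on_approx E f s eta : is_sup_on E f s -> 0 < eta -> exists y, E y /\ s - eta < f y.
Proof.
  intros [_ H] He. apply NNPP. intro Hn.
  enough (s <= s - eta) by lra. apply H. intros r (e & Ee & ->).
  apply Rnot_lt_le. intro. apply Hn. now exists e.
Qed.

Lemma slice_is_sup_on E f s delta y :
  is_sup_on E f s -> (slice f E delta y <-> E y /\ s - delta < f y).
Proof.
  intro Hs. split.
  - intros (Hy & s' & Hs' & Hf). now rewrite (is_lub_u _ _ _ Hs' Hs) in Hf.
  - intros [Hy Hf]. split; auto. now exists s.
Qed.

Lemma kuratowski_lt_cover (D : X -> Prop) a eps :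
  is_kuratowski D a -> a < eps -> exists e, 0 < e < eps /\ finite_cover_diam D e.
Proof.
  intros [_ Hglb] Ha. apply NNPP. intro Hn.
  enough ((a + eps) / 2 <= a) by lra. apply Hglb. intros e He Hc.
  apply Rnot_lt_le. intro Hlt. apply Hn. exists e. split; auto. lra.
Qed.

(* A bound on pairwise distances that is affine in a linear functional survives
   passing to convex combinations, applied once on each side. *)
Lemma conv_pairwise_affine_le E g a b : linear_functional X g ->
  (forall p p', E p -> E p' -> vnorm (vsub p p') <= a + b * g p + b * g p') ->
  forall z z', conv E z -> conv E z' -> vnorm (vsub z z') <= a + b * g z + b * g z'.
Proof.
  intros Hg HE z z' (n & l & p & Hl & S & ->) (n' & l' & p' & Hl' & S' & ->).
  assert (Hw : convex_weights n l) by (split; auto; apply Hl).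
  assert (Hw' : convex_weights n' l') by (split; auto; apply Hl').
  assert (Hp : forall i, (i < n)%nat ->
            vnorm (vsub (p i) (vsum n' l' p')) <= (a + b * g (p i)) + b * g (vsum n' l' p')).
  { intros i Hi. apply vsum_dist_affine_le; auto.
    intros j Hj. apply HE; [apply Hl | apply Hl']; auto. }
  rewrite vnorm_subC.
  enough (vnorm (vsub (vsum n' l' p') (vsum n l p))
          <= (a + b * g (vsum n' l' p')) + b * g (vsum n l p)) by lra.
  apply vsum_dist_affine_le; auto.
  intros i Hi. rewrite vnorm_subC. pose proof (Hp i Hi). lra.
Qed.

End SlicesAndCovers.

Section ShallowSlices.
Variable X : BanachSpace.
Variables (A C : X -> Prop) (M : R).
Hypothesis A_bounded : forall y, A y -> vnorm y <= M.
Hypothesis A_nonempty : nonempty_set A.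
Hypothesis C_hull : forall x, C x <-> cch A x.

(* Slices of C, parametrized by the threshold c instead of the depth sup g(C) - c. *)
Definition cap (g : X -> R) (c : R) (y : X) := C y /\ c < g y.

Lemma C_of_A y : A y -> C y.
Proof. intro. apply C_hull, cch_self; auto. Qed.

Lemma C_bounded y : C y -> vnorm y <= M.
Proof. intro H. apply C_hull in H. eapply cch_norm_le; eauto. Qed.

Lemma C_diam_le y y' : C y -> C y' -> vnorm (vsub y y') <= 2 * M.
Proof.
  intros H H'. pose proof (vnorm_sub_le X y y'). pose proof (C_bounded y H).
  pose proof (C_bounded y' H'). lra.
Qed.

Lemma is_sup_on_hull f : in_dual_ball f -> exists s, is_sup_on X C f s /\ is_sup_on X A f s.
Proof.
  intro Hf. destruct A_nonempty as [a0 Ha0].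
  assert (Hb : bound (fun r => exists e, A e /\ r = f e)).
  { exists M. intros r (e & He & ->). pose proof (proj2 (proj2 Hf) e).
    pose proof (Rle_abs (f e)). pose proof (A_bounded e He). lra. }
  destruct (completeness _ Hb (ex_intro _ (f a0) (ex_intro _ a0 (conj Ha0 eq_refl))))
    as [s [Hs1 Hs2]].
  exists s. split; [split|split; auto].
  - intros r (e & He & ->). apply C_hull in He.
    apply (cch_dual_le X A f s Hf); auto. intros y Hy. apply Hs1. now exists y.
  - intros b Hb'. apply Hs2. intros r (e & He & ->). apply Hb'. exists e. split; auto.
    now apply C_of_A.
Qed.

Lemma M_ge0 : 0 <= M.
Proof. destruct A_nonempty as [a0 Ha0]. pose proof (A_bounded a0 Ha0). pose proof (vnorm_ge0 X a0). lra. Qed.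

Section Dentable.
Variables (eps e : R) (g : X -> R) (s c : R) (B : X -> Prop).
Hypothesis A_non_dentable : non_dentable eps A.
Hypothesis e_lt_eps : 0 < e < eps.
Hypothesis B_diam : diam_le B e.
Hypothesis g_dual : in_dual_ball g.
Hypothesis s_sup_C : is_sup_on X C g s.
Hypothesis s_sup_A : is_sup_on X A g s.
Hypothesis c_lt_s : c < s.

Let kappa := 2 * M / (s - c).

Lemma kappa_ge0 : 0 <= kappa.
Proof. pose proof M_ge0. unfold kappa, Rdiv. apply Rmult_le_pos; [lra|]. left. apply Rinv_0_lt_compat. lra. Qed.

(* A point below level c already contributes kappa (s - c) = 2M >= diam C;
   only pairs inside B need the bound e. *)
Lemma low_or_B_pairwise_le p p' : C p -> g p <= c \/ B p -> C p' -> g p' <= c \/ B p' ->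
  vnorm (vsub p p') <= (e + 2 * kappa * s) + (- kappa) * g p + (- kappa) * g p'.
Proof.
  intros Cp Hp Cp' Hp'.
  pose proof (is_sup_on_ge X C g s p s_sup_C Cp). pose proof (is_sup_on_ge X C g s p' s_sup_C Cp').
  pose proof (C_diam_le p p' Cp Cp'). pose proof kappa_ge0.
  assert (Hk : kappa * (s - c) = 2 * M) by (unfold kappa; field; lra).
  destruct Hp as [Hp | Hp]; [nra|]. destruct Hp' as [Hp' | Hp']; [nra|].
  pose proof (B_diam p p' Hp Hp'). nra.
Qed.

(* Otherwise the slices of A near the top of g would all have diameter <= eps. *)
Lemma not_hull_of_low_or_B : exists x, C x /\ ~ cch (fun y => C y /\ (g y <= c \/ B y)) x.
Proof.
  set (G := fun y => C y /\ (g y <= c \/ B y)).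
  apply NNPP. intro Hn.
  assert (HG : forall x, C x -> cch G x) by (intros x Cx; apply NNPP; intro; apply Hn; now exists x).
  assert (Hconv := conv_pairwise_affine_le X G g (e + 2 * kappa * s) (- kappa)
    (dual_ball_linear X g g_dual) (fun p p' Hp Hp' => low_or_B_pairwise_le p p'
      (proj1 Hp) (proj2 Hp) (proj1 Hp') (proj2 Hp'))).
  pose proof kappa_ge0.
  set (tau := (eps - e) / (2 + 4 * kappa)).
  assert (Htau : 0 < tau) by (unfold tau; apply Rdiv_lt_0_compat; lra).
  assert (Htau2 : tau * (2 + 4 * kappa) = eps - e) by (unfold tau; field; lra).
  apply (A_non_dentable g tau g_dual Htau).
  intros a a' Sa Sa'.
  apply (slice_is_sup_on X _ _ _ _ _ s_sup_A) in Sa as [Aa Ga].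
  apply (slice_is_sup_on X _ _ _ _ _ s_sup_A) in Sa' as [Aa' Ga'].
  destruct (HG a (C_of_A a Aa) tau Htau) as (z & Hz & Dz).
  destruct (HG a' (C_of_A a' Aa') tau Htau) as (z' & Hz' & Dz').
  pose proof (Hconv z z' Hz Hz').
  pose proof (dual_ball_le X g a z g_dual). pose proof (dual_ball_le X g a' z' g_dual).
  pose proof (vnorm_sub_triangle X a z a'). pose proof (vnorm_sub_triangle X z z' a').
  rewrite (vnorm_subC X z' a') in *.
  nra.
Qed.

End Dentable.

Lemma cap_avoiding eps e g c B :
  non_dentable eps A -> 0 < e < eps -> diam_le B e -> in_dual_ball g ->
  (exists y, cap g c y) ->
  exists h c', in_dual_ball h /\ (exists y, cap h c' y) /\
    forall y, cap h c' y -> cap g c y /\ ~ B y.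
Proof.
  intros ND He HB Hg [y0 [Cy0 Gy0]].
  destruct (is_sup_on_hull g Hg) as (s & HsC & HsA).
  pose proof (is_sup_on_ge X C g s y0 HsC Cy0).
  destruct (not_hull_of_low_or_B eps e g s c B ND He HB Hg HsC HsA ltac:(lra))
    as (x & Cx & Hx).
  destruct (cch_separation X _ x M (fun y Hy => C_bounded y (proj1 Hy)) Hx)
    as (h & c' & Hh & Hle & Hlt).
  exists h, c'. split; [|split]; [auto | now exists x |].
  intros y [Cy Hy].
  assert (Hlow : ~ (g y <= c \/ B y)).
  { intro Hl. pose proof (Hle y (cch_self X _ y (conj Cy Hl))). lra. }
  split; [split; [exact Cy|] |].
  - apply Rnot_le_lt. intro. apply Hlow. now left.
  - intro. apply Hlow. now right.
Qed.

Lemma cap_avoiding_cover eps e f c n (B : nat -> X -> Prop) :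
  non_dentable eps A -> 0 < e < eps -> (forall i, (i < n)%nat -> diam_le (B i) e) ->
  in_dual_ball f -> (exists y, cap f c y) ->
  exists g c', in_dual_ball g /\ (exists y, cap g c' y) /\
    forall y, cap g c' y -> cap f c y /\ forall i, (i < n)%nat -> ~ B i y.
Proof.
  intros ND He HB Hf Hy. induction n as [|m IH].
  - exists f, c. split; [|split]; auto. intros y Hy0. split; auto. intros i Hi. lia.
  - destruct IH as (g & c' & Hg & Hy' & Hgy); [intros i Hi; apply HB; lia|].
    destruct (cap_avoiding eps e g c' (B m) ND He (HB m ltac:(lia)) Hg Hy')
      as (h & c'' & Hh & Hy'' & Hhy).
    exists h, c''. split; [|split]; auto. intros y Hy1.
    destruct (Hhy y Hy1) as [G1 G2]. destruct (Hgy y G1) as [F1 F2].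
    split; auto. intros i Hi. destruct (Nat.eq_dec i m) as [-> | Him]; auto. apply F2. lia.
Qed.

(* A nonempty cap lies in the slice S(g, C, eta) with eta = sup g(C) - c, and the
   points of A high enough on g lie in its shallow parallel. *)
Lemma cap_meets_Lambda S0 D gamma g c : 0 < gamma < 1 -> in_dual_ball g ->
  (exists y, cap g c y) -> (forall y, cap g c y -> S0 y /\ ~ D y) ->
  exists a, A a /\ Lambda C S0 D gamma a /\ cap g c a.
Proof.
  intros Hgam Hg [y0 [Cy0 Gy0]] Hcap.
  destruct (is_sup_on_hull g Hg) as (s & HsC & HsA).
  pose proof (is_sup_on_ge X C g s y0 HsC Cy0).
  set (eta := s - c).
  destruct (is_sup_on_approx X A g s (gamma * eta / 2) HsA ltac:(unfold eta; nra))
    as (a & Aa & Ga).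
  assert (Hga : c < g a) by (unfold eta in Ga; nra).
  exists a. split; [|split]; auto; [|split; auto; now apply C_of_A].
  exists g, eta. split; [|split; [unfold eta; lra | split]]; auto.
  - intros y Sy. apply (slice_is_sup_on X _ _ _ _ _ HsC) in Sy as [Cy Gy].
    apply Hcap. split; auto. unfold eta in Gy. lra.
  - apply (slice_is_sup_on X _ _ _ _ _ HsC). split; auto. now apply C_of_A.
Qed.

End ShallowSlices.

Theorem lemma2 (X : BanachSpace) (eps : R) (A : X -> Prop)
  (C S0 D : X -> Prop) (gamma : R) :
  0 < eps ->
  bounded_set A -> nonempty_set A -> non_dentable eps A ->
  (forall x, C x <-> cch A x) ->
  is_slice_of C S0 ->
  (forall x, D x -> C x) ->
  (exists a, is_kuratowski D a /\ a < eps) ->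
  0 < gamma < 1 ->
  forall x, C x <->
    cch (fun y => (C y /\ ~ S0 y) \/ (Lambda C S0 D gamma y /\ A y)) x.
Proof.
  intros _ [M HM] HA ND HC _ _ (a & Ha & Haeps) Hgam x.
  set (B := fun y => (C y /\ ~ S0 y) \/ (Lambda C S0 D gamma y /\ A y)).
  assert (BC : forall y, B y -> C y) by (intros y [[Cy _] | [_ Ay]]; auto; now apply (C_of_A X A C)).
  assert (BM : forall y, B y -> vnorm y <= M) by (intros y By; apply (C_bounded X A C M HM HC), BC, By).
  split.
  - intro Cx. apply NNPP. intro Hn.
    destruct (cch_separation X B x M BM Hn) as (f & c & Hf & HfB & Hfx).
    destruct (kuratowski_lt_cover X D a eps Ha Haeps) as (e & He & n & Bi & HBi & Hcov).
    destruct (cap_avoiding_cover X A C M HM HA HC eps e f c n Bi ND He HBi Hf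
                (ex_intro _ x (conj Cx Hfx))) as (g & c' & Hg & Hne & Hgf).
    destruct (cap_meets_Lambda X A C M HM HA HC S0 D gamma g c' Hgam Hg Hne)
      as (a' & Aa & La & Ca).
    + intros y Hy. destruct (Hgf y Hy) as [[Cy Fy] Hnot]. split.
      * apply NNPP. intro NS. pose proof (HfB y (cch_self X B y (or_introl (conj Cy NS)))). lra.
      * intro Dy. destruct (Hcov y Dy) as (i & Hi & Biy). exact (Hnot i Hi Biy).
    + destruct (Hgf a' Ca) as [[_ Fa] _].
      pose proof (HfB a' (cch_self X B a' (or_intror (conj La Aa)))). lra.
  - intro Hx. apply HC. apply (cch_minimal X B A M HM); auto.
    intros y By. now apply HC, BC.
Qed.
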